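(* Let $t$ be a normal $\lambda$-term, $v$ a closed $\lambda$-term, $\alpha,x$ variables, and $x_1,\dots,x_n$ ($n\ge0$) variables distinct from $\alpha$. If $t[\lambda x_1\dots\lambda x_n\alpha/x]\rightarrow_\beta v$, then $x\notin Fv(t)$.
   Context: $\lambda$-terms are those of the untyped $\lambda$-calculus; $Fv(t)$ is the set of free variables of $t$; a term is closed if it has no free variable; $t[u/x]$ is capture-avoiding substitution; $\rightarrow_\beta$ denotes $\beta$-reduction in zero or more steps; a term is normal if it contains no $\beta$-redex. *)

(* Untyped lambda-calculus in de Bruijn representation
   (terms up to alpha-equivalence; free variables = free indices). *)
From Stdlib Require Import Arith Relations.

Inductive term : Type :=
| Var : nat -> term
| App : term -> term -> term
| Lam : term -> term.

Fixpoint lift (k c : nat) (t : term) : term :=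
  match t with
  | Var y => if Nat.ltb y c then Var y else Var (y + k)
  | App t1 t2 => App (lift k c t1) (lift k c t2)
  | Lam t1 => Lam (lift k (S c) t1)
  end.

(* beta-substitution: t{u/k}, replaces index k by u (lifted by k) and
   decrements the free indices above k (the binder disappears) *)
Fixpoint bsubst (t : term) (k : nat) (u : term) : term :=
  match t with
  | Var y =>
      if Nat.eqb y k then lift k 0 u
      else if Nat.ltb y k then Var y else Var (pred y)
  | App t1 t2 => App (bsubst t1 k u) (bsubst t2 k u)
  | Lam t1 => Lam (bsubst t1 (S k) u)
  end.

Fixpoint subst (t : term) (x : nat) (u : term) : term :=
  match t with
  | Var y => if Nat.eqb y x then u else Var y
  | App t1 t2 => App (subst t1 x u) (subst t2 x u)
  | Lam t1 => Lam (subst t1 (S x) (lift 1 0 u))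
  end.

Fixpoint free_in (x : nat) (t : term) : Prop :=
  match t with
  | Var y => y = x
  | App t1 t2 => free_in x t1 \/ free_in x t2
  | Lam t1 => free_in (S x) t1
  end.

Definition closed (t : term) : Prop := forall x, ~ free_in x t.

Inductive beta : term -> term -> Prop :=
| beta_redex : forall t u, beta (App (Lam t) u) (bsubst t 0 u)
| beta_appl : forall t t' u, beta t t' -> beta (App t u) (App t' u)
| beta_appr : forall t u u', beta u u' -> beta (App t u) (App t u')
| beta_lam : forall t t', beta t t' -> beta (Lam t) (Lam t').

Definition beta_star : term -> term -> Prop := clos_refl_trans term beta.

Fixpoint normal (t : term) : Prop :=
  match t with
  | Var _ => True
  | App (Lam _) _ => False
  | App t1 t2 => normal t1 /\ normal t2
  | Lam t1 => normal t1
  end.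

Fixpoint lams (n : nat) (b : term) : term :=
  match n with
  | 0 => b
  | S m => Lam (lams m b)
  end.

(* \x_1...\x_n. alpha, with alpha a free variable distinct from the x_i:
   under n binders the free variable alpha has index n + alpha *)
Definition proj_term (n alpha : nat) : term := lams n (Var (n + alpha)).

From Stdlib Require Import Arith Lia Classical.

(* Substituting the projection [P = \x_1...\x_n. alpha] into a normal [t]
   creates redexes only of the form [P u], and such a redex reduces to a
   shorter projection of the same shape.  Hence along any reduction every
   redex keeps a projection onto [alpha] as its function part.  Moreover,
   where [x] occurred in [t], [alpha] now occurs at a position that no
   reduction can erase: such a position is reached through lambda bodies,
   function parts of applications, and arguments of applications headed by
   a variable, and firing a projection redex only turns it into a shorter
   projection or into [alpha] itself.  So [alpha] stays free in every
   reduct, which therefore cannot be closed. *)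

Lemma proj_term_S (n k : nat) : proj_term (S n) k = Lam (proj_term n (S k)).
Proof. unfold proj_term. simpl. rewrite Nat.add_succ_r. reflexivity. Qed.

Lemma lift_proj_term (n c k : nat) :
  c <= k -> lift 1 c (proj_term n k) = proj_term n (S k).
Proof.
  revert c k; induction n as [|n IHn]; intros c k Hck.
  - unfold proj_term; simpl. destruct (Nat.ltb_spec k c); [lia|]. f_equal. lia.
  - rewrite !proj_term_S. simpl. f_equal. apply IHn. lia.
Qed.

Lemma bsubst_proj_term (m j k : nat) (u : term) :
  j <= k -> bsubst (proj_term m (S k)) j u = proj_term m k.
Proof.
  revert j k; induction m as [|m IHm]; intros j k Hjk.
  - unfold proj_term; cbn [lams Nat.add bsubst].
    destruct (Nat.eqb_spec (S k) j); [lia|].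
    destruct (Nat.ltb_spec (S k) j); [lia|]. reflexivity.
  - rewrite !proj_term_S. simpl. f_equal. apply IHm. lia.
Qed.

Lemma proj_term_irreducible (m k : nat) (s : term) : ~ beta (proj_term m k) s.
Proof.
  revert k s; induction m as [|m IHm]; intros k s Hb.
  - inversion Hb.
  - rewrite proj_term_S in Hb. inversion Hb; subst. eapply IHm; eauto.
Qed.

Definition is_proj (k : nat) (s : term) : Prop :=
  exists m, s = proj_term (S m) k.

Definition lam_is_proj (k : nat) (s : term) : Prop :=
  match s with
  | Lam _ => is_proj k s
  | _ => True
  end.

Fixpoint proj_redexes (k : nat) (s : term) : Prop :=
  match s with
  | Var _ => True
  | App a u => proj_redexes k a /\ proj_redexes k u /\ lam_is_proj k a
  | Lam b => proj_redexes (S k) b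
  end.

Fixpoint var_headed (s : term) : Prop :=
  match s with
  | Var _ => True
  | App a _ => var_headed a
  | Lam _ => False
  end.

Inductive persists : nat -> term -> Prop :=
| persists_var : forall k, persists k (Var k)
| persists_lam : forall k s, persists (S k) s -> persists k (Lam s)
| persists_appl : forall k s u, persists k s -> persists k (App s u)
| persists_appr : forall k s u,
    var_headed s -> persists k u -> persists k (App s u).

Lemma lam_is_proj_proj_term (m k : nat) : lam_is_proj k (proj_term m k).
Proof. destruct m as [|m]; [exact I | exists m; reflexivity]. Qed.

Lemma proj_redexes_proj_term (m k j : nat) : proj_redexes k (proj_term m j).
Proof.
  revert k j; induction m as [|m IHm]; intros k j; [exact I|].
  rewrite proj_term_S. apply IHm.
Qed.

Lemma persists_proj_term (m k : nat) : persists k (proj_term m k).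
Proof.
  revert k; induction m as [|m IHm]; intros k.
  - constructor.
  - rewrite proj_term_S. constructor. apply IHm.
Qed.

Lemma contract_proj_redex (k : nat) (b u : term) :
  lam_is_proj k (Lam b) -> exists m, bsubst b 0 u = proj_term m k.
Proof.
  intros [m Hm]. rewrite proj_term_S in Hm. injection Hm as ->.
  exists m. apply bsubst_proj_term. lia.
Qed.

Lemma lam_is_proj_beta (k : nat) (s s' : term) :
  beta s s' -> proj_redexes k s -> lam_is_proj k s -> lam_is_proj k s'.
Proof.
  intros Hb Hw Hl. destruct Hb as [b u|a a' u _|a u u' _|b b' Hb]; try exact I.
  - destruct Hw as [_ [_ Hlam]].
    destruct (contract_proj_redex k b u Hlam) as [m ->].
    apply lam_is_proj_proj_term.
  - destruct Hl as [m Hm]. exfalso.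
    apply (proj_term_irreducible (S m) k (Lam b')).
    rewrite <- Hm. constructor. exact Hb.
Qed.

Lemma proj_redexes_beta (s s' : term) :
  beta s s' -> forall k, proj_redexes k s -> proj_redexes k s'.
Proof.
  induction 1 as [b u|a a' u Hb IH|a u u' Hb IH|b b' Hb IH]; intros k Hw;
    simpl in *.
  - destruct Hw as [_ [_ Hlam]].
    destruct (contract_proj_redex k b u Hlam) as [m ->].
    apply proj_redexes_proj_term.
  - destruct Hw as [Ha [Hu Hl]]. eauto using lam_is_proj_beta.
  - destruct Hw as [Ha [Hu Hl]]. auto.
  - auto.
Qed.

Lemma var_headed_beta (s s' : term) :
  beta s s' -> var_headed s -> var_headed s'.
Proof. induction 1; simpl; auto. intros []. Qed.

Lemma persists_beta (s s' : term) :
  beta s s' -> forall k, proj_redexes k s -> persists k s -> persists k s'.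
Proof.
  induction 1 as [b u|a a' u Hb IH|a u u' Hb IH|b b' Hb IH]; intros k Hw Hp;
    simpl in Hw.
  - destruct Hw as [_ [_ Hlam]].
    destruct (contract_proj_redex k b u Hlam) as [m ->].
    apply persists_proj_term.
  - destruct Hw as [Ha _]. inversion Hp; subst.
    + apply persists_appl; auto.
    + apply persists_appr; eauto using var_headed_beta.
  - destruct Hw as [_ [Hu _]]. inversion Hp; subst.
    + apply persists_appl; auto.
    + apply persists_appr; auto.
  - inversion Hp; subst. constructor; auto.
Qed.

Lemma persists_beta_star (k : nat) (s s' : term) :
  beta_star s s' -> proj_redexes k s -> persists k s -> persists k s'.
Proof.
  intros Hst. cut (proj_redexes k s /\ persists k s ->
                   proj_redexes k s' /\ persists k s').
  { intros Hinv Hw Hp. apply Hinv. auto. }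
  induction Hst as [a b Hb| |]; intros [Hw Hp]; auto.
  split; [eapply proj_redexes_beta | eapply persists_beta]; eauto.
Qed.

Lemma persists_free_in (k : nat) (s : term) : persists k s -> free_in k s.
Proof. induction 1; simpl; auto. Qed.

Lemma normal_app (a b : term) : normal (App a b) -> normal a /\ normal b.
Proof. destruct a; simpl; tauto. Qed.

Lemma normal_app_var_headed (a b : term) : normal (App a b) -> var_headed a.
Proof.
  revert b; induction a as [y|a1 IHa1 a2 _|a _]; intros b Hn; simpl.
  - exact I.
  - apply (IHa1 a2). apply (normal_app _ _ Hn).
  - destruct Hn.
Qed.

Lemma var_headed_subst (t u : term) (x : nat) :
  var_headed t -> ~ free_in x t -> var_headed (subst t x u).
Proof.
  induction t as [y|t1 IHt1 t2 _|t _]; intros Hh Hf; simpl in *.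
  - destruct (Nat.eqb_spec y x); [contradiction | exact I].
  - auto.
  - contradiction.
Qed.

Lemma proj_redexes_subst (t : term) (x n k : nat) :
  normal t -> proj_redexes k (subst t x (proj_term n k)).
Proof.
  revert x k; induction t as [y|t1 IHt1 t2 IHt2|t IHt]; intros x k Hn; simpl.
  - destruct (Nat.eqb y x); [apply proj_redexes_proj_term | exact I].
  - destruct (normal_app _ _ Hn) as [Hn1 Hn2].
    split; [auto | split; [auto|]].
    destruct t1 as [y|a b|a]; simpl; [|exact I | destruct Hn].
    destruct (Nat.eqb y x); [apply lam_is_proj_proj_term | exact I].
  - rewrite lift_proj_term by lia. auto.
Qed.

Lemma persists_subst (t : term) (x n k : nat) :
  normal t -> free_in x t -> persists k (subst t x (proj_term n k)).
Proof.
  revert x k; induction t as [y|t1 IHt1 t2 IHt2|t IHt]; intros x k Hn Hf;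
    simpl in *.
  - subst. rewrite Nat.eqb_refl. apply persists_proj_term.
  - destruct (normal_app _ _ Hn) as [Hn1 Hn2].
    destruct (classic (free_in x t1)) as [Hx1|Hx1].
    + apply persists_appl. auto.
    + apply persists_appr.
      * apply var_headed_subst; [|exact Hx1].
        eapply normal_app_var_headed; eauto.
      * destruct Hf; [contradiction | auto].
  - constructor. rewrite lift_proj_term by lia. auto.
Qed.

Theorem corollary2p1p3 (t v : term) (alpha x n : nat) :
  normal t -> closed v ->
  beta_star (subst t x (proj_term n alpha)) v ->
  ~ free_in x t.
Proof.
  intros Hn Hv Hst Hx.
  apply (Hv alpha), persists_free_in.
  apply (persists_beta_star alpha _ _ Hst).
  - apply proj_redexes_subst, Hn.
  - apply persists_subst; assumption.
Qed.
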